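(* The set of synthetic flag positroids on $[n]$ equals the set of realizable flag positroids on $[n]$. Equivalently: a collection of subsets of $[n]$ is of the form $\{I\subseteq[n]: P_I(F)\neq 0\}$ for some $F\in\mathrm{Fl}_n^{\ge 0}$ if and only if it is of the form $\{I\subseteq[n]: P_I(F)\neq 0\}$ for some $F\in\mathrm{Fl}_n$ all of whose Plücker coordinates are nonnegative.
   Context: $\mathrm{Fl}_n$ is the real complete flag variety, flags represented by invertible $n\times n$ real matrices $M$ (the $i$-th subspace is the span of the top $i$ rows; representatives differ by left multiplication by invertible lower triangular matrices). $P_I(M)$ is the minor of $M$ in rows $1,\dots,|I|$ and columns $I$. ''All Plücker coordinates of $F$ nonnegative'' means some representing matrix has all $P_I\ge 0$. $\mathrm{Fl}_n^{\ge0}$ is the Euclidean closure of the set of flags having a totally positive representing matrix (all minors positive). A realizable flag positroid is the collection of indices of nonzero Plücker coordinates of a flag in $\mathrm{Fl}_n^{\ge 0}$ (a flag matroid); a synthetic flag positroid is the collection of indices of nonzero Plücker coordinates of a flag $F\in\mathrm{Fl}_n$ with $P_I(F)\ge 0$ for all $I\subseteq[n]$. *)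

From HB Require Import structures.
From mathcomp Require Import all_boot all_order all_algebra.
From mathcomp Require Import reals.
Set Implicit Arguments. Unset Strict Implicit. Unset Printing Implicit Defensive.
Import Order.TTheory GRing.Theory Num.Theory.
Local Open Scope ring_scope.

Lemma card_set_le_ord (n : nat) (I : {set 'I_n}) : (#|I| <= n)%N.
Proof. by rewrite -[X in (_ <= X)%N](card_ord n) max_card. Qed.

(* P_I(M): minor of M in rows 1..|I| and columns I (listed increasingly). *)
Definition plucker (R : realType) (n : nat) (M : 'M[R]_n) (I : {set 'I_n}) : R :=
  \det (\matrix_(i < #|I|, j < #|I|)
          M (widen_ord (card_set_le_ord I) i) (enum_val j)).

Definition totally_positive (R : realType) (n : nat) (M : 'M[R]_n) : Prop :=
  forall (k : nat) (r c : 'I_k -> 'I_n),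
    (0 < k)%N ->
    (forall i j : 'I_k, (i < j)%N -> (r i < r j)%N) ->
    (forall i j : 'I_k, (i < j)%N -> (c i < c j)%N) ->
    0 < \det (\matrix_(i < k, j < k) M (r i) (c j)).

Definition lower_tri_invertible (R : realType) (n : nat) (L : 'M[R]_n) : Prop :=
  L \in unitmx /\ forall i j : 'I_n, (i < j)%N -> L i j = 0.

(* The flag of the invertible matrix M lies in Fl_n^{>=0}: the closure (in the
   quotient topology of GL_n / B_-) of the flags having a totally positive
   representative.  Since the quotient map is open and the set is B_- saturated,
   this means M lies in the closure (in GL_n, entrywise topology) of
   { L *m A | L invertible lower triangular, A totally positive }. *)
Definition in_tnn_flag (R : realType) (n : nat) (M : 'M[R]_n) : Prop :=
  M \in unitmx /\
  forall eps : R, 0 < eps ->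
    exists L A : 'M[R]_n,
      [/\ lower_tri_invertible L, totally_positive A &
          forall i j : 'I_n, `|(L *m A) i j - M i j| < eps].

Definition nonzero_pluckers (R : realType) (n : nat) (M : 'M[R]_n)
  : {set {set 'I_n}} := [set I | plucker M I != 0].

Definition realizable_flag_positroid (R : realType) (n : nat)
    (C : {set {set 'I_n}}) : Prop :=
  exists M : 'M[R]_n, in_tnn_flag M /\ C = nonzero_pluckers M.

Definition synthetic_flag_positroid (R : realType) (n : nat)
    (C : {set {set 'I_n}}) : Prop :=
  exists M : 'M[R]_n, [/\ M \in unitmx,
    (forall I : {set 'I_n}, 0 <= plucker M I) & C = nonzero_pluckers M].

From HB Require Import structures.
From mathcomp Require Import all_boot all_order all_algebra.
From mathcomp Require Import reals.
From mathcomp Require Import fingroup perm.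
From mathcomp Require Import ring lra.
Set Implicit Arguments. Unset Strict Implicit. Unset Printing Implicit Defensive.
Import Order.TTheory GRing.Theory Num.Theory.
Local Open Scope ring_scope.

(* A flag with nonnegative Pluecker coordinates is approximated by flags with
   totally positive representatives in two steps.  Right multiplication by the
   totally positive matrix with entries 1 / cosh ((i - j) ln q), close to the
   identity for large q, makes every top-justified minor positive: by
   Cauchy-Binet such a minor is a sum of nonnegative Pluecker coordinates times
   positive minors, and invertibility provides a nonzero coordinate of each
   size.  Left multiplication by a lower triangular matrix, which does not
   change the flag, then makes all minors positive: we use falling factorials
   scaled by powers of a small t, so that in the Cauchy-Binet expansion of any
   minor the term through the leftmost columns has the lowest power of t and
   dominates.
   Conversely, for L A with L lower triangular and A totally positive, the sign
   of a Pluecker coordinate only depends on its size; by continuity the same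
   holds weakly in the closure, and rescaling the rows by signs makes all the
   coordinates nonnegative without changing which of them vanish. *)

Lemma sorted_enum_ord n (A : {pred 'I_n}) : sorted ltn (map val (enum A)).
Proof.
rewrite -[enum _](eq_filter (mem_enum _)) -(eq_filter (mem_map val_inj _)) -filter_map.
by rewrite (sorted_filter ltn_trans) // unlock val_ord_enum iota_ltn_sorted.
Qed.

Section IncreasingMaps.
Variables k n : nat.
Implicit Types f g h : 'I_k -> 'I_n.

Definition increasing f : Prop := forall i j : 'I_k, (i < j)%N -> (f i < f j)%N.

Definition increasingb f : bool :=
  [forall i : 'I_k, forall j : 'I_k, (i < j)%N ==> (f i < f j)%N].

Lemma increasingP f : reflect (increasing f) (increasingb f).
Proof.
apply: (iffP forallP) => [f_incr i j | f_incr i]; last first.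
  by apply/forallP => j; apply/implyP => /f_incr.
by move/forallP: (f_incr i) => /(_ j) /implyP.
Qed.

Lemma increasing_inj f : increasing f -> injective f.
Proof.
move=> f_incr i j fij.
by case: (ltngtP i j) => [/f_incr | /f_incr | /val_inj //]; rewrite fij ltnn.
Qed.

Lemma increasing_leq f : increasing f -> forall i : 'I_k, (i <= f i)%N.
Proof.
move=> f_incr [i lt_ik]; elim: i lt_ik => [|i IHi] lt_ik //=.
exact: leq_ltn_trans (IHi (ltnW lt_ik)) (f_incr (Ordinal (ltnW lt_ik)) _ _).
Qed.

Lemma increasing_nth (x0 : 'I_n) (s : seq 'I_n) :
  sorted ltn (map val s) -> size s = k -> increasing (fun i : 'I_k => nth x0 s i).
Proof.
move=> s_sorted s_k i j lt_ij; rewrite -!(nth_map x0 0%N) ?s_k //.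
by apply: (sorted_ltn_nth ltn_trans) => //; rewrite inE size_map s_k.
Qed.

Lemma increasing_codom f : increasing f -> codom f = enum (f @: setT).
Proof.
move=> f_incr; apply: (inj_map val_inj); apply: (irr_sorted_eq ltn_trans ltnn).
- rewrite codomE -map_comp sorted_map.
  apply: (sub_sorted _ (_ : sorted (relpre val ltn) (enum 'I_k))) => [i j /f_incr //|].
  by rewrite -sorted_map; apply: sorted_enum_ord.
- exact: sorted_enum_ord.
- move=> x; apply/mapP/mapP => -[y y_in ->]; exists y => //; move: y_in.
  + by rewrite mem_enum => /codomP [i ->]; apply: imset_f.
  + by rewrite mem_enum => /imsetP [i _ ->]; apply: codom_f.
Qed.

Lemma increasing_eq f g :
  increasing f -> increasing g -> f @: setT = g @: setT -> f =1 g.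
Proof.
move=> f_incr g_incr fg i.
have := congr1 (fun A : {set 'I_n} => nth (f i) (enum A) i) fg.
rewrite /= -(increasing_codom f_incr) -(increasing_codom g_incr) !codomE.
by rewrite !(nth_map i) -?enumT ?size_enum_ord // nth_ord_enum.
Qed.

Lemma increasing_sum_lt f : increasing f -> (exists i : 'I_k, (i < f i)%N) ->
  (\sum_(i < k) (i : nat) < \sum_i f i)%N.
Proof.
move=> f_incr [i lt_i]; rewrite (bigD1 i) //= [X in (_ < X)%N](bigD1 i) //=.
by rewrite -addSn leq_add // leq_sum // => j _; apply: increasing_leq.
Qed.

Definition sort_fun (h : 'I_k -> 'I_n) : {ffun 'I_k -> 'I_n} :=
  [ffun i => nth (h i) (enum (h @: setT)) i].

Lemma size_enum_imset h : injective h -> size (enum (h @: setT)) = k.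
Proof. by move=> h_inj; rewrite -cardE card_imset // cardsT card_ord. Qed.

Lemma sort_fun_nth h x0 i : injective h ->
  sort_fun h i = nth x0 (enum (h @: setT)) i.
Proof. by move=> h_inj; rewrite ffunE; apply: set_nth_default; rewrite size_enum_imset. Qed.

Lemma sort_fun_increasing h : injective h -> increasing (sort_fun h).
Proof.
move=> h_inj i j lt_ij; rewrite !(sort_fun_nth (h i) _ h_inj).
by apply: increasing_nth lt_ij; [apply: sorted_enum_ord | apply: size_enum_imset].
Qed.

Lemma sort_fun_imset h : injective h -> sort_fun h @: setT = h @: setT.
Proof.
move=> h_inj; have sort_inj := increasing_inj (sort_fun_increasing h_inj).
apply/eqP; rewrite eqEcard !card_imset // leqnn andbT.
apply/subsetP => _ /imsetP [i _ ->].
by rewrite (sort_fun_nth (h i) _ h_inj) -mem_enum mem_nth ?size_enum_imset.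
Qed.

Lemma sort_fun_perm h : injective h -> exists s : 'S_k, forall i, h i = sort_fun h (s i).
Proof.
move=> h_inj; set S := enum (h @: setT).
have h_in i : h i \in S by rewrite mem_enum imset_f.
have index_lt i : (index (h i) S < k)%N by rewrite -(size_enum_imset h_inj) index_mem.
pose s0 i := Ordinal (index_lt i).
have s0_inj : injective s0.
  move=> i j /(congr1 val) /= eq_ij; apply: h_inj.
  by rewrite -(nth_index (h i) (h_in i)) eq_ij nth_index.
by exists (perm s0_inj) => i; rewrite permE (sort_fun_nth (h i) _ h_inj) nth_index.
Qed.

End IncreasingMaps.

Section CauchyBinet.
Variable R : comNzRingType.

Lemma det_mulmx_sum_rowsub k n (P : 'M[R]_(k, n)) (Q : 'M[R]_(n, k)) :
  \det (P *m Q) = \sum_(h : {ffun 'I_k -> 'I_n}) (\prod_i P i (h i)) * \det (rowsub h Q).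
Proof.
rewrite /(\det _).
transitivity (\sum_(s : 'S_k) \sum_(h : {ffun 'I_k -> 'I_n})
   (-1) ^+ s * \prod_i (P i (h i) * Q (h i) (s i))).
  apply: eq_bigr => s _; rewrite -big_distrr /=; congr (_ * _).
  rewrite -(bigA_distr_bigA (fun i j => P i j * Q j (s i))) /=.
  by apply: eq_bigr => i _; rewrite mxE.
rewrite exchange_big; apply: eq_bigr => h _ /=.
rewrite big_distrr; apply: eq_bigr => s _ /=.
rewrite big_split /= mulrCA; congr (_ * (_ * _)).
by apply: eq_bigr => i _; rewrite mxE.
Qed.

Variables k n : nat.
Implicit Types (f h : {ffun 'I_k -> 'I_n}) (s : 'S_k).

Definition comp_perm (p : {ffun 'I_k -> 'I_n} * 'S_k) : {ffun 'I_k -> 'I_n} :=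
  [ffun i => p.1 (p.2 i)].

Definition sort_decomp (h : {ffun 'I_k -> 'I_n}) : {ffun 'I_k -> 'I_n} * 'S_k :=
  (sort_fun h, odflt 1%g [pick s : 'S_k | comp_perm (sort_fun h, s) == h]).

Lemma sort_decompK h : injective h -> comp_perm (sort_decomp h) = h.
Proof.
move=> h_inj; rewrite /sort_decomp; case: pickP => [s /eqP // | no_perm].
have [s hs] := sort_fun_perm h_inj.
by move: (no_perm s) => /negP []; apply/eqP/ffunP => i; rewrite ffunE /= hs.
Qed.

Lemma comp_permK f s : increasing f -> sort_decomp (comp_perm (f, s)) = (f, s).
Proof.
move=> f_incr; set h := comp_perm (f, s).
have h_inj : injective h.
  by move=> i j; rewrite !ffunE /= => /(increasing_inj f_incr) /perm_inj.
have sort_h : sort_fun h = f :> {ffun 'I_k -> 'I_n}.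
  apply/ffunP/increasing_eq => //; first exact: sort_fun_increasing.
  rewrite sort_fun_imset //; apply/setP => x.
  apply/imsetP/imsetP => -[i _ ->]; first by exists (s i); rewrite ?ffunE.
  by exists ((s^-1)%g i); rewrite ?ffunE //= permKV.
rewrite /sort_decomp sort_h; congr (_, _).
case: pickP => [s' /eqP /ffunP hs' | /(_ s)]; last by rewrite eqxx.
by apply/permP => i; move: (hs' i); rewrite !ffunE /= => /(increasing_inj f_incr).
Qed.

Lemma cauchy_binet (P : 'M[R]_(k, n)) (Q : 'M[R]_(n, k)) :
  \det (P *m Q) = \sum_(f : {ffun 'I_k -> 'I_n} | increasingb f)
     \det (colsub f P) * \det (rowsub f Q).
Proof.
rewrite det_mulmx_sum_rowsub (bigID (fun h : {ffun 'I_k -> 'I_n} => injectiveb h)) /=.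
rewrite [X in _ + X]big1 ?addr0; last first.
  move=> h /injectivePn [i1 [i2 ne e]].
  by rewrite (determinant_alternate ne) ?mulr0 // => j; rewrite !mxE e.
rewrite (reindex_onto comp_perm sort_decomp); last first.
  by move=> h /injectiveP; apply: sort_decompK.
rewrite (eq_bigl (fun p : {ffun 'I_k -> 'I_n} * 'S_k => increasingb p.1)); last first.
  move=> [f s] /=; apply/idP/idP.
    case/andP => /injectiveP h_inj /eqP decomp_fs.
    have -> : f = (sort_decomp (comp_perm (f, s))).1 by rewrite decomp_fs.
    exact/increasingP/(sort_fun_increasing h_inj).
  move=> /increasingP f_incr; rewrite comp_permK // eqxx andbT.
  by apply/injectiveP => i j; rewrite !ffunE /= => /(increasing_inj f_incr) /perm_inj.
transitivity (\sum_(f : {ffun 'I_k -> 'I_n} | increasingb f) \sum_(s : 'S_k)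
   \prod_i P i (comp_perm (f, s) i) * \det (rowsub (comp_perm (f, s)) Q)).
  by rewrite pair_big_dep; apply: eq_big => [[f s] | [f s] _] //=; rewrite andbT.
apply: eq_bigr => f _; rewrite [\det (colsub f P)]/(\det _) big_distrl /=.
apply: eq_bigr => s _.
have -> : rowsub (comp_perm (f, s)) Q = row_perm s (rowsub f Q).
  by apply/matrixP => i j; rewrite !mxE ffunE.
rewrite row_permE det_mulmx det_perm mulrA [_ * (-1) ^+ _]mulrC; congr (_ * _ * _).
by apply: eq_bigr => i _; rewrite !mxE ffunE.
Qed.

End CauchyBinet.

Section Minors.
Variable R : comNzRingType.

Definition minor m n k (M : 'M[R]_(m, n)) (r : 'I_k -> 'I_m) (c : 'I_k -> 'I_n) : R :=
  \det (\matrix_(i, j) M (r i) (c j)).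

Lemma eq_minor m n k (M : 'M[R]_(m, n)) (r r' : 'I_k -> 'I_m) (c c' : 'I_k -> 'I_n) :
  r =1 r' -> c =1 c' -> minor M r c = minor M r' c'.
Proof.
by move=> rr' cc'; congr (\det _); apply/matrixP => i j; rewrite !mxE rr' cc'.
Qed.

Lemma minor_cast m n k k' (e : k = k') (M : 'M[R]_(m, n)) r c :
  minor M r c = minor M (r \o cast_ord (esym e)) (c \o cast_ord (esym e)).
Proof. by case: k' / e; apply: eq_minor => i /=; rewrite cast_ord_id. Qed.

Lemma minor_mulmx m n p k (P : 'M[R]_(m, n)) (Q : 'M[R]_(n, p))
    (r : 'I_k -> 'I_m) (c : 'I_k -> 'I_p) :
  minor (P *m Q) r c =
    \sum_(f : {ffun 'I_k -> 'I_n} | increasingb f) minor P r f * minor Q f c.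
Proof.
have -> : minor (P *m Q) r c = \det (rowsub r P *m colsub c Q).
  by congr (\det _); apply/matrixP => i j; rewrite !mxE; apply: eq_bigr => l _; rewrite !mxE.
rewrite cauchy_binet; apply: eq_bigr => f _; rewrite /minor.
by congr (_ * _); congr (\det _); apply/matrixP => i j; rewrite !mxE.
Qed.

Lemma minor_lower_mulmx n k (le_kn : (k <= n)%N) (L A : 'M[R]_n) (c : 'I_k -> 'I_n) :
  is_trig_mx L -> minor (L *m A) (widen_ord le_kn) c =
    (\prod_(i < k) L (widen_ord le_kn i) (widen_ord le_kn i)) * minor A (widen_ord le_kn) c.
Proof.
move=> /is_trig_mxP L_lower; set w := widen_ord le_kn; rewrite /minor.
have -> : \matrix_(i, j) (L *m A) (w i) (c j) =
    \matrix_(i, j) L (w i) (w j) *m \matrix_(i, j) A (w i) (c j).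
  apply/matrixP => i j; rewrite !mxE.
  rewrite (bigID (fun l : 'I_n => (l < k)%N)) /= [X in _ + X]big1 ?addr0; last first.
    by move=> l; rewrite -leqNgt => le_kl; rewrite L_lower ?mul0r // (leq_trans (ltn_ord i)).
  by rewrite (big_ord_narrow le_kn); apply: eq_bigr => l _; rewrite !mxE.
rewrite det_mulmx det_trig; last by apply/is_trig_mxP => i j lt_ij; rewrite mxE L_lower.
by congr (_ * _); apply: eq_bigr => i _; rewrite mxE.
Qed.

End Minors.

Section CauchyMatrix.
Variable F : fieldType.

Definition cauchy_mx k (x y : 'I_k -> F) : 'M[F]_k := \matrix_(i, j) (x i + y j)^-1.

Lemma det_cauchy_mx_recr k (x y : 'I_k.+1 -> F) (m := ord_max) :
  (forall i j, x i + y j != 0) ->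
  \det (cauchy_mx x y) = (x m + y m)^-1 *
    (\prod_i ((x m - x (lift m i)) / (x (lift m i) + y m))) *
    \det (cauchy_mx (x \o lift m) (y \o lift m)) *
    (\prod_j ((y m - y (lift m j)) / (x m + y (lift m j)))).
Proof.
move=> xy_neq0; set K := cauchy_mx x y.
pose a i := (x m + y m) / (x i + y m).
pose E : 'M[F]_k.+1 := 1%:M - \matrix_(i, l) (((l == m) && (i != m))%:R * a i).
have det_E : \det E = 1.
  rewrite -det_tr det_trig; last first.
    apply/is_trig_mxP => i j lt_ij; rewrite !mxE.
    have i_neq_m : i != m by rewrite -val_eqE /= ltn_eqF // (leq_trans lt_ij) // -ltnS.
    by rewrite (negPf i_neq_m) /= mul0r subr0 -val_eqE /= gtn_eqF.
  by apply: big1 => i _; rewrite !mxE eqxx andbN mul0r subr0.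
have EK i j : (E *m K) i j = K i j - (i != m)%:R * a i * K m j.
  rewrite mulmxBl mul1mx !mxE; congr (_ - _).
  rewrite (bigD1 m) //= big1 ?addr0; last first.
    by move=> l /negPf l_neq_m; rewrite !mxE l_neq_m /= !mul0r.
  by rewrite !mxE eqxx /= mulrA.
have -> : \det K = \det (E *m K) by rewrite det_mulmx det_E mul1r.
rewrite (expand_det_col _ m) (bigD1 m) //= big1 ?addr0; last first.
  move=> i i_neq_m; rewrite EK i_neq_m /= !mxE /a.
  suff -> : (x i + y m)^-1 - 1 * ((x m + y m) / (x i + y m)) * (x m + y m)^-1 = 0
    by rewrite mul0r.
  by field; rewrite !xy_neq0.
rewrite EK eqxx /= !mul0r subr0 mxE /cofactor -signr_odd addnn odd_double mul1r.
have -> : row' m (col' m (E *m K)) =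
    diag_mx (\row_i ((x m - x (lift m i)) / (x (lift m i) + y m))) *m
    cauchy_mx (x \o lift m) (y \o lift m) *m
    diag_mx (\row_j ((y m - y (lift m j)) / (x m + y (lift m j)))).
  apply/matrixP => i j; rewrite mul_mx_diag mul_diag_mx [LHS]mxE [LHS]mxE EK.
  rewrite eq_sym neq_lift /= !mxE /a /=.
  by field; rewrite !xy_neq0.
rewrite !det_mulmx !det_diag !mulrA.
by congr (_ * _ * _ * _); apply: eq_bigr => i _; rewrite mxE.
Qed.

End CauchyMatrix.

Lemma det_cauchy_mx_gt0 (R : realFieldType) k (x y : 'I_k -> R) :
  (forall i, 0 < x i) -> (forall j, 0 < y j) ->
  (forall i j : 'I_k, (i < j)%N -> x i < x j) ->
  (forall i j : 'I_k, (i < j)%N -> y i < y j) ->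
  0 < \det (cauchy_mx x y).
Proof.
elim: k x y => [|k IHk] x y x_gt0 y_gt0 x_incr y_incr; first by rewrite det_mx00.
rewrite det_cauchy_mx_recr => [|i j]; last by rewrite gt_eqF ?addr_gt0.
apply: mulr_gt0; first apply: mulr_gt0; first apply: mulr_gt0.
- by rewrite invr_gt0 addr_gt0.
- apply: prodr_gt0 => i _; apply: divr_gt0; last exact: addr_gt0.
  by rewrite subr_gt0 x_incr // (lift_max i).
- by apply: IHk => [i | j | i j | i j] //= lt_ij; [apply: x_incr | apply: y_incr];
    rewrite !lift_max.
- apply: prodr_gt0 => j _; apply: divr_gt0; last exact: addr_gt0.
  by rewrite subr_gt0 y_incr // (lift_max j).
Qed.

Section SechMatrix.
Variable R : realFieldType.
Variable q : R.
Hypothesis q_gt1 : 1 < q.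

Let q_gt0 : 0 < q. Proof. exact: lt_trans q_gt1. Qed.

(* The entries are 1 / cosh ((i - j) ln q): a Cauchy matrix up to positive
   diagonal scalings. *)
Definition sech_mx n : 'M[R]_n :=
  \matrix_(i, j) (2 * q ^+ i * q ^+ j / (q ^+ i.*2 + q ^+ j.*2)).

Lemma sech_mx_minor_gt0 n k (r c : 'I_k -> 'I_n) : increasing r -> increasing c ->
  0 < minor (sech_mx n) r c.
Proof.
move=> r_incr c_incr; rewrite /minor.
have -> : \matrix_(a, b) sech_mx n (r a) (c b) =
    diag_mx (\row_a (2 * q ^+ r a)) *m
    cauchy_mx (fun a => q ^+ (r a).*2) (fun b => q ^+ (c b).*2) *m
    diag_mx (\row_b q ^+ c b).
  by apply/matrixP => a b; rewrite mul_mx_diag mul_diag_mx !mxE mulrAC.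
rewrite !det_mulmx !det_diag; apply: mulr_gt0; first apply: mulr_gt0.
- by apply: prodr_gt0 => a _; rewrite mxE mulr_gt0 // exprn_gt0.
- apply: det_cauchy_mx_gt0 => [a | b | a b /r_incr lt_ab | a b /c_incr lt_ab];
    by rewrite ?exprn_gt0 // ltr_eXn2l // ltn_double.
- by apply: prodr_gt0 => a _; rewrite mxE exprn_gt0.
Qed.

Lemma sech_entry_le (i j : nat) : (i < j)%N ->
  0 <= 2 * q ^+ i * q ^+ j / (q ^+ i.*2 + q ^+ j.*2) <= 2 / q.
Proof.
move=> lt_ij; have den_gt0 : 0 < q ^+ i.*2 + q ^+ j.*2 by rewrite addr_gt0 // exprn_gt0.
apply/andP; split; first by rewrite divr_ge0 // ?ltW // !mulr_gt0 ?exprn_gt0.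
rewrite ler_pdivrMr //.
have qij_le : q * (q ^+ i * q ^+ j) <= q ^+ j.*2.
  by rewrite -addnn exprD mulrA ler_pM2r ?exprn_gt0 // -exprS ler_eXn2l.
apply: le_trans (_ : (2 / q) * (q * (q ^+ i * q ^+ j)) <= _).
  by rewrite -!mulrA mulKf ?gt_eqF.
rewrite ler_pM2l ?divr_gt0 //; apply: le_trans qij_le _.
by rewrite lerDr exprn_ge0 // ltW.
Qed.

Lemma sech_mx_near_id n (i j : 'I_n) : `|sech_mx n i j - (i == j)%:R| <= 2 / q.
Proof.
rewrite mxE; case: (ltngtP i j) => [lt_ij | lt_ji | /val_inj ->].
- rewrite -val_eqE /= (ltn_eqF lt_ij) subr0.
  by case/andP: (sech_entry_le lt_ij) => ge0 le; rewrite ger0_norm.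
- rewrite -val_eqE /= (gtn_eqF lt_ji) subr0 [2 * _ * q ^+ j]mulrAC [q ^+ i.*2 + _]addrC.
  by case/andP: (sech_entry_le lt_ji) => ge0 le; rewrite ger0_norm.
- have -> : 2 * q ^+ j * q ^+ j / (q ^+ j.*2 + q ^+ j.*2) = 1.
    rewrite -[2 * _ * _]mulrA -exprD addnn; field.
    by rewrite gt_eqF // addr_gt0 // exprn_gt0.
  by rewrite eqxx subrr normr0 divr_ge0 // ltW.
Qed.

End SechMatrix.

Section FallingMatrix.
Variable R : numFieldType.

Definition falling_poly (j : nat) : {poly R} :=
  \prod_(x <- [seq m%:R | m <- iota 0 j]) ('X - x%:P).

Definition falling_mx n : 'M[R]_n := \matrix_(i, j) (falling_poly j).[i%:R].

Lemma size_falling_poly j : size (falling_poly j) = j.+1.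
Proof. by rewrite size_prod_XsubC size_map size_iota. Qed.

Lemma falling_mx_lower n : is_trig_mx (falling_mx n).
Proof.
apply/is_trig_mxP => i j lt_ij; rewrite mxE; apply/eqP.
by rewrite -/(root _ _) root_prod_XsubC map_f // mem_iota.
Qed.

Lemma falling_mx_diag_gt0 n (i : 'I_n) : 0 < falling_mx n i i.
Proof.
rewrite mxE horner_prod big_map big_seq; apply: prodr_gt0 => m.
by rewrite mem_iota add0n => /andP [_ lt_mi]; rewrite !hornerE subr_gt0 ltr_nat.
Qed.

Lemma falling_mx_minor_ge1 n k (r : 'I_k -> 'I_n) (le_kn : (k <= n)%N) :
  increasing r -> 1 <= minor (falling_mx n) r (widen_ord le_kn).
Proof.
move=> r_incr; rewrite /minor.
pose V := Vandermonde k (\row_a (r a)%:R : 'rV[R]_k).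
pose T : 'M[R]_k := \matrix_(c, b) (falling_poly b)`_c.
have -> : \matrix_(a, b) falling_mx n (r a) (widen_ord le_kn b) = V^T *m T.
  apply/matrixP => a b; rewrite !mxE (@horner_coef_wide _ k) ?size_falling_poly //.
    by apply: eq_bigr => c _; rewrite !mxE mulrC.
  exact: (ltn_ord b).
have det_T : \det T = 1.
  rewrite -det_tr det_trig; last first.
    apply/is_trig_mxP => i j lt_ij; rewrite !mxE nth_default //.
    by rewrite size_falling_poly.
  apply: big1 => i _; rewrite !mxE.
  have /monicP := monic_prod_XsubC [seq (m%:R : R) | m <- iota 0 i] predT id.
  by rewrite /lead_coef size_prod_XsubC size_map size_iota.
rewrite det_mulmx det_T mulr1 det_tr det_Vandermonde.
rewrite (eq_bigr (fun i : 'I_k => (\prod_(j < k | (i < j)%N) (r j - r i)%N)%:R)); last first.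
  move=> i _; rewrite natr_prod; apply: eq_bigr => j lt_ij.
  by rewrite !mxE natrB // ltnW // r_incr.
rewrite -natr_prod ler1n prodn_gt0 // => i.
by rewrite prodn_cond_gt0 // => j /r_incr; rewrite subn_gt0.
Qed.

Definition scaled_falling_mx n (t : R) : 'M[R]_n :=
  falling_mx n *m diag_mx (\row_j t ^+ j).

Lemma scaled_falling_mxE n t i j : scaled_falling_mx n t i j = falling_mx n i j * t ^+ j.
Proof. by rewrite /scaled_falling_mx mul_mx_diag !mxE. Qed.

Lemma scaled_falling_mx_lower n t : is_trig_mx (scaled_falling_mx n t).
Proof.
apply/is_trig_mxP => i j lt_ij; rewrite scaled_falling_mxE.
by move/is_trig_mxP: (falling_mx_lower n) => ->; rewrite ?mul0r.
Qed.

Lemma scaled_falling_mx_unit n t : t != 0 -> scaled_falling_mx n t \in unitmx.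
Proof.
move=> t_neq0; rewrite unitmx_mul !unitmxE !unitfE det_trig ?falling_mx_lower //.
rewrite det_diag; apply/andP; split; apply/prodf_neq0 => i _.
  by rewrite gt_eqF ?falling_mx_diag_gt0.
by rewrite mxE expf_neq0.
Qed.

Lemma minor_scaled_falling_mx n k (r c : 'I_k -> 'I_n) t :
  minor (scaled_falling_mx n t) r c = t ^+ (\sum_b c b) * minor (falling_mx n) r c.
Proof.
rewrite /minor (_ : \matrix_(a, b) _ = \matrix_(a, b) falling_mx n (r a) (c b) *m
    diag_mx (\row_b t ^+ c b)); last first.
  by rewrite mul_mx_diag; apply/matrixP => a b; rewrite [LHS]mxE scaled_falling_mxE !mxE.
rewrite det_mulmx det_diag mulrC -prodrXr; congr (_ * _).
by apply: eq_bigr => b _; rewrite mxE.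
Qed.

End FallingMatrix.

Lemma trig_invmx (F : fieldType) n (X : 'M[F]_n) :
  is_trig_mx X -> X \in unitmx -> is_trig_mx (invmx X).
Proof.
move=> /is_trig_mxP X_lower X_unit; apply/is_trig_mxP.
have X_diag_neq0 j : X j j != 0.
  move: X_unit; rewrite unitmxE unitfE det_trig; last exact/is_trig_mxP.
  by apply: contraNneq => Xjj0; rewrite (bigD1 j) //= Xjj0 mul0r.
(* Descending induction on the column j: once the entries of [invmx X] to the
   right of column j vanish, entry (i, j) of [invmx X *m X] is
   [invmx X i j * X j j]. *)
suff Y_lower d (i j : 'I_n) : (n <= j + d)%N -> (i < j)%N -> invmx X i j = 0.
  by move=> i j; apply: (Y_lower n); rewrite leq_addl.
elim: d i j => [|d IHd] i j le_n_jd lt_ij.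
  by move: le_n_jd; rewrite addn0 leqNgt ltn_ord.
have : (invmx X *m X) i j = 0 by rewrite mulVmx // !mxE -val_eqE /= ltn_eqF.
rewrite mxE (bigD1 j) //= big1 ?addr0 => [|l l_neq_j].
  by move/eqP; rewrite mulf_eq0 (negPf (X_diag_neq0 j)) orbF => /eqP.
case: (ltngtP l j) => [lt_lj | lt_jl | /val_inj l_eq_j].
- by rewrite X_lower // mulr0.
- rewrite IHd ?mul0r ?(ltn_trans lt_ij) //.
  by rewrite (leq_trans le_n_jd) // addnS -addSn leq_add2r.
- by rewrite l_eq_j eqxx in l_neq_j.
Qed.

Section Bounds.
Variable R : realFieldType.

Definition mx_l1 m p (Y : 'M[R]_(m, p)) : R := \sum_i \sum_j `|Y i j|.

Lemma mx_l1_ge0 m p (Y : 'M[R]_(m, p)) : 0 <= mx_l1 Y.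
Proof. by apply: sumr_ge0 => i _; apply: sumr_ge0. Qed.

Lemma normr_entry_le_l1 m p (Y : 'M[R]_(m, p)) i j : `|Y i j| <= mx_l1 Y.
Proof.
rewrite /mx_l1 (bigD1 i) //= (bigD1 j) //= -addrA lerDl addr_ge0 //.
  by apply: sumr_ge0.
by apply: sumr_ge0 => *; apply: sumr_ge0.
Qed.

Lemma det_norm_le k (Y : 'M[R]_k) (C : R) : 0 <= C -> (forall i j, `|Y i j| <= C) ->
  `|\det Y| <= k`!%:R * C ^+ k.
Proof.
move=> C_ge0 Y_le; apply: le_trans (ler_norm_sum _ _ _) _.
apply: le_trans (_ : \sum_(s : 'S_k) C ^+ k <= _); last first.
  by rewrite sumr_const card_Sn mulr_natl.
apply: ler_sum => s _.
rewrite normrM normrX normrN normr1 expr1n mul1r normr_prod.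
rewrite -[k in C ^+ k]card_ord -prodr_const.
by apply: ler_prod => i _; rewrite normr_ge0 Y_le.
Qed.

Lemma norm_prodrB_le k (z y : 'I_k -> R) (C d : R) : 1 <= C ->
  (forall i, `|z i| <= C) -> (forall i, `|y i| <= C) -> (forall i, `|z i - y i| <= d) ->
  `|\prod_i z i - \prod_i y i| <= k%:R * C ^+ k * d.
Proof.
elim: k z y => [|k IHk] z y C_ge1 z_le y_le zy_le.
  by rewrite !big_ord0 subrr normr0 !mul0r.
have d_ge0 : 0 <= d by apply: le_trans (zy_le ord0); apply: normr_ge0.
have C_ge0 : 0 <= C by apply: le_trans C_ge1.
rewrite !big_ord_recr /=; set pz := \prod_(i < k) _; set py := \prod_(i < k) _.
have pz_le : `|pz| <= C ^+ k.
  rewrite normr_prod -[k in C ^+ k]card_ord -prodr_const.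
  by apply: ler_prod => i _; rewrite normr_ge0 z_le.
have pzy_le : `|pz - py| <= k%:R * C ^+ k * d by apply: IHk => // i.
have -> : pz * z ord_max - py * y ord_max =
    pz * (z ord_max - y ord_max) + (pz - py) * y ord_max by ring.
apply: le_trans (ler_normD _ _) _; rewrite !normrM.
have -> : k.+1%:R * C ^+ k.+1 * d = C * (C ^+ k * d) + (k%:R * C ^+ k * d) * C.
  by rewrite exprS -addn1 natrD; ring.
apply: lerD; last by apply: ler_pM; rewrite ?normr_ge0.
apply: le_trans (_ : C ^+ k * d <= _); first by apply: ler_pM; rewrite ?normr_ge0.
by rewrite ler_peMl // mulr_ge0 // exprn_ge0.
Qed.

Lemma det_lipschitz k (Y Z : 'M[R]_k) (C d : R) : 1 <= C ->
  (forall i j, `|Y i j| <= C) -> (forall i j, `|Z i j| <= C) ->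
  (forall i j, `|Z i j - Y i j| <= d) ->
  `|\det Z - \det Y| <= k`!%:R * (k%:R * C ^+ k * d).
Proof.
move=> C_ge1 Y_le Z_le ZY_le; rewrite /(\det Z) /(\det Y) -sumrB.
apply: le_trans (ler_norm_sum _ _ _) _.
apply: le_trans (_ : \sum_(s : 'S_k) k%:R * C ^+ k * d <= _); last first.
  by rewrite sumr_const card_Sn [X in _ <= X]mulr_natl.
apply: ler_sum => s _.
rewrite -mulrBr normrM normrX normrN1 expr1n mul1r.
by apply: norm_prodrB_le.
Qed.

Lemma det_continuous k (Y : 'M[R]_k) (eps : R) : 0 < eps ->
  exists2 del : R, 0 < del & forall Z : 'M[R]_k,
    (forall i j, `|Z i j - Y i j| < del) -> `|\det Z - \det Y| < eps.
Proof.
move=> eps_gt0; pose C := 2 + mx_l1 Y; have l1_ge0 := mx_l1_ge0 Y.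
have C_ge1 : 1 <= C by rewrite /C; lra.
pose W := k`!%:R * (k%:R * C ^+ k).
have W_ge0 : 0 <= W by rewrite !mulr_ge0 // exprn_ge0 // (le_trans _ C_ge1).
exists (Num.min 1 (eps / (W + 1))) => [|Z ZY_lt].
  by rewrite lt_min ltr01 divr_gt0 // ltr_wpDl.
set d := Num.min _ _ in ZY_lt.
have d_le1 : d <= 1 by rewrite ge_min lexx.
have d_le : d <= eps / (W + 1) by rewrite ge_min lexx orbT.
have d_ge0 : 0 <= d by rewrite le_min ler01 divr_ge0 // ltW // ltr_wpDl.
have Y_le i j : `|Y i j| <= C.
  by have := normr_entry_le_l1 Y i j; rewrite /C; lra.
have Z_le i j : `|Z i j| <= C.
  have := ler_normD (Z i j - Y i j) (Y i j); rewrite subrK.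
  have := ltW (ZY_lt i j); have := normr_entry_le_l1 Y i j; rewrite /C; lra.
apply: le_lt_trans (det_lipschitz C_ge1 Y_le Z_le (fun i j => ltW (ZY_lt i j))) _.
rewrite mulrA -/W; apply: le_lt_trans (_ : W * (eps / (W + 1)) < _).
  by rewrite ler_wpM2l.
by rewrite mulrA ltr_pdivrMr ?ltr_wpDl // mulrDr mulr1 mulrC ltrDl.
Qed.

Lemma sum_dominant_gt0 (I : finType) (P : pred I) (i0 : I) (e : I -> nat)
    (a : I -> R) (t mu K N : R) :
  P i0 -> (forall i, P i -> i != i0 -> (e i0 < e i)%N) -> mu <= a i0 ->
  (forall i, `|a i| <= K) -> #|I|%:R <= N -> 0 < mu -> 0 < t -> t <= 1 ->
  t * N * K < mu -> 0 < \sum_(i | P i) t ^+ e i * a i.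
Proof.
move=> P_i0 e_gt mu_le a_le card_le mu_gt0 t_gt0 t_le1 t_small.
have K_ge0 : 0 <= K by apply: le_trans (a_le i0); apply: normr_ge0.
rewrite (bigD1 i0) //=; set S := \sum_(i | _) _; set u := t ^+ e i0.
have u_gt0 : 0 < u by rewrite exprn_gt0.
have S_le : `|S| <= u * (t * N * K).
  apply: le_trans (ler_norm_sum _ _ _) _.
  apply: le_trans (_ : \sum_(i | P i && (i != i0)) (u * t * K) <= _).
    apply: ler_sum => i /andP [P_i i_neq0]; rewrite normrM normrX (gtr0_norm t_gt0).
    apply: ler_pM => //; first by rewrite exprn_ge0 // ltW.
    by rewrite /u -exprSr; apply: ler_wiXn2l; [exact: ltW | done | exact: e_gt].
  rewrite sumr_const -[u * t * K *+ _]mulr_natl.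
  rewrite (_ : u * (t * N * K) = N * (u * t * K)); last by ring.
  apply: ler_wpM2r; first by rewrite !mulr_ge0 // ltW.
  by apply: le_trans card_le; rewrite ler_nat max_card.
have S_ge : - `|S| <= S by rewrite lerNnormlW.
have mu_u : u * mu <= u * a i0 by rewrite ler_wpM2l // ltW.
have : 0 < u * (mu - t * N * K) by rewrite mulr_gt0 // subr_gt0.
by rewrite mulrBr; lra.
Qed.

Lemma mul_gt0_near (a b : R) : `|a - b| < `|b| -> 0 < a * b.
Proof.
case: (ltrgt0P b) => [b_gt0 | b_lt0 | _]; last by rewrite normr_lt0.
- by rewrite ltr_norml => /andP [lo _]; rewrite mulr_gt0 //; lra.
- by rewrite ltr_norml => /andP [_ hi]; rewrite -mulrNN mulr_gt0 //; lra.
Qed.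

Lemma minor_norm_le n m p k (Y : 'M[R]_(m, p)) (r : 'I_k -> 'I_m) (c : 'I_k -> 'I_p)
    (C : R) :
  (k <= n)%N -> 1 <= C -> mx_l1 Y <= C -> `|minor Y r c| <= n`!%:R * C ^+ n.
Proof.
move=> le_kn C_ge1 Y_le; have C_ge0 : 0 <= C by apply: le_trans C_ge1.
apply: le_trans (_ : k`!%:R * C ^+ k <= _).
  apply: det_norm_le => // i j; rewrite mxE; exact: le_trans (normr_entry_le_l1 Y _ _) Y_le.
by apply: ler_pM; rewrite ?ler0n ?exprn_ge0 // ?ler_nat ?leq_fact // ler_weXn2l.
Qed.

Lemma mulmx_near n (M G : 'M[R]_n) (d : R) :
  (forall i j, `|G i j - (i == j)%:R| <= d) ->
  forall i j, `|(M *m G) i j - M i j| <= mx_l1 M * d.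
Proof.
move=> G_near i j.
have -> : (M *m G) i j - M i j = \sum_l M i l * (G l j - (l == j)%:R).
  rewrite mxE; under [RHS]eq_bigr do rewrite mulrBr.
  rewrite sumrB; congr (_ - _).
  by rewrite (bigD1 j) //= eqxx mulr1 big1 ?addr0 // => l /negPf ->; rewrite mulr0.
apply: le_trans (ler_norm_sum _ _ _) _.
have d_ge0 : 0 <= d by apply: le_trans (G_near i i); apply: normr_ge0.
apply: le_trans (_ : \sum_l `|M i l| * d <= _).
  by apply: ler_sum => l _; rewrite normrM ler_wpM2l.
rewrite -mulr_suml; apply: ler_wpM2r => //.
rewrite /mx_l1 [X in _ <= X](bigD1 i) //= lerDl.
by apply: sumr_ge0 => *; apply: sumr_ge0.
Qed.

End Bounds.

Section Pluecker.
Variables (R : realType) (n : nat).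
Implicit Types (M A L : 'M[R]_n) (S I J : {set 'I_n}).

Lemma pluckerE M S :
  plucker M S = minor M (widen_ord (card_set_le_ord S)) (@enum_val _ (pred_of_set S)).
Proof. by []. Qed.

Lemma increasing_enum_val S : increasing (@enum_val _ (pred_of_set S)).
Proof.
move=> i j lt_ij; rewrite (enum_val_nth (enum_val i) i) (enum_val_nth (enum_val i) j).
by apply: increasing_nth lt_ij; [apply: sorted_enum_ord | rewrite -cardE].
Qed.

Lemma plucker_imset M k (le_kn : (k <= n)%N) (c : 'I_k -> 'I_n) :
  increasing c -> plucker M (c @: setT) = minor M (widen_ord le_kn) c.
Proof.
move=> c_incr; have card_c : #|c @: setT| = k.
  by rewrite card_imset ?cardsT ?card_ord //; apply: increasing_inj.
rewrite pluckerE (minor_cast card_c); apply: eq_minor => j /=; first exact: val_inj.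
rewrite (enum_val_nth (c j) (cast_ord _ j)) /= -(increasing_codom c_incr) codomE.
by rewrite (nth_map j) -?enumT ?size_enum_ord // nth_ord_enum.
Qed.

Lemma plucker_card0 M S : #|S| = 0%N -> plucker M S = 1.
Proof.
move=> S0; rewrite pluckerE /minor; move: (\matrix_(i, j) _ : 'M[R]_#|S|).
by rewrite S0 => Y; apply: det_mx00.
Qed.

Lemma plucker_gt0 A S : totally_positive A -> 0 < plucker A S.
Proof.
move=> A_tp; have [S0 | S_gt0] := posnP #|S|; first by rewrite plucker_card0.
by apply: A_tp => //; apply: increasing_enum_val.
Qed.

Lemma plucker_lower_mulmx L A S : is_trig_mx L ->
  plucker (L *m A) S = (\prod_(i < n | (i < #|S|)%N) L i i) * plucker A S.
Proof.
by move=> L_lower; rewrite !pluckerE minor_lower_mulmx // (big_ord_narrow (card_set_le_ord S)).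
Qed.

Lemma plucker_sign_near M S : plucker M S != 0 -> exists2 del : R, 0 < del &
  forall M', (forall i j, `|M' i j - M i j| < del) -> 0 < plucker M' S * plucker M S.
Proof.
move=> pMS_neq0; have pMS_gt0 : 0 < `|plucker M S| by rewrite normr_gt0.
pose sub_S (M' : 'M[R]_n) :=
  \matrix_(i, j) M' (widen_ord (card_set_le_ord S) i) (@enum_val _ (pred_of_set S) j).
have [del del_gt0 det_near] := det_continuous (sub_S M) pMS_gt0.
exists del => // M' M'_near; apply: mul_gt0_near.
by apply: (det_near (sub_S M')) => i j; rewrite !mxE.
Qed.

Lemma tnn_plucker_same_card_sign M I J : in_tnn_flag M -> #|I| = #|J| ->
  0 <= plucker M I * plucker M J.
Proof.
move=> [_ M_lim] card_IJ; rewrite leNgt; apply/negP => pIJ_lt0.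
have /negbT := lt_eqF pIJ_lt0; rewrite mulf_eq0 => /norP [pI_neq0 pJ_neq0].
have [delI delI_gt0 nearI] := plucker_sign_near pI_neq0.
have [delJ delJ_gt0 nearJ] := plucker_sign_near pJ_neq0.
have del_gt0 : 0 < Num.min delI delJ by rewrite lt_min delI_gt0.
have [L [A [[_ L_lower] A_tp LA_near]]] := M_lim _ del_gt0.
have L_trig : is_trig_mx L by apply/is_trig_mxP.
have pI' : 0 < plucker (L *m A) I * plucker M I.
  by apply: nearI => i j; apply: lt_le_trans (LA_near i j) _; rewrite ge_min lexx.
have pJ' : 0 < plucker (L *m A) J * plucker M J.
  by apply: nearJ => i j; apply: lt_le_trans (LA_near i j) _; rewrite ge_min lexx orbT.
have pIJ'_ge0 : 0 <= plucker (L *m A) I * plucker (L *m A) J.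
  rewrite !plucker_lower_mulmx // card_IJ mulrACA -expr2.
  by rewrite mulr_ge0 ?sqr_ge0 // ltW // mulr_gt0 // plucker_gt0.
have := mulr_gt0 pI' pJ'; rewrite mulrACA.
by rewrite ltNge mulr_ge0_le0 // ltW.
Qed.

Lemma tnn_flag_synthetic M : in_tnn_flag M -> synthetic_flag_positroid R (nonzero_pluckers M).
Proof.
move=> M_tnn.
(* [s k] is the common sign of the Pluecker coordinates of size k, and the row
   scaling [D] multiplies those by [s 0 * s k = s k]. *)
pose s (k : nat) : R :=
  if [exists S : {set 'I_n}, (#|S| == k) && (plucker M S < 0)] then -1 else 1.
have s_sqr k : s k * s k = 1 by rewrite /s; case: ifP; rewrite ?mulrNN mulr1.
have s_neq0 k : s k != 0.
  by apply: contra_eq_neq (s_sqr k) => ->; rewrite mul0r eq_sym oner_eq0.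
have s0 : s 0%N = 1.
  rewrite /s; case: existsP => // -[S /andP [/eqP S0 pS_lt0]].
  by move: pS_lt0; rewrite plucker_card0 // ltr10.
pose D : 'M[R]_n := diag_mx (\row_i (s i * s i.+1)).
have plucker_DM S : plucker (D *m M) S = s #|S| * plucker M S.
  rewrite plucker_lower_mulmx ?diag_mx_is_trig //; congr (_ * _).
  rewrite (big_ord_narrow (card_set_le_ord S)).
  rewrite (eq_bigr (fun i : 'I_#|S| => s i * s i.+1)) => [|i _]; last by rewrite !mxE eqxx.
  elim: #|S| => [|k IHk]; first by rewrite big_ord0 s0.
  by rewrite big_ord_recr /= IHk mulrA s_sqr mul1r.
exists (D *m M); split.
- rewrite unitmx_mul M_tnn.1 andbT unitmxE unitfE det_diag.
  by apply/prodf_neq0 => i _; rewrite mxE mulf_neq0.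
- move=> S; rewrite plucker_DM /s.
  case: existsP => [[S' /andP [/eqP card_S' pS'_lt0]] | no_neg].
    rewrite mulN1r oppr_ge0; have := tnn_plucker_same_card_sign M_tnn (esym card_S').
    by rewrite nmulr_lge0.
  by rewrite mul1r leNgt; apply/negP => pS_lt0; apply: no_neg; exists S; rewrite eqxx.
- by apply/setP => S; rewrite !inE plucker_DM mulf_eq0 negb_or s_neq0.
Qed.

Lemma exists_top_minor_neq0 M k (le_kn : (k <= n)%N) : M \in unitmx ->
  exists2 f : {ffun 'I_k -> 'I_n}, increasingb f & minor M (widen_ord le_kn) f != 0.
Proof.
move=> M_unit; set w := widen_ord le_kn.
have : minor (M *m invmx M) w w = 1.
  rewrite mulmxV // /minor (_ : \matrix_(i, j) _ = 1%:M) ?det1 //.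
  by apply/matrixP => i j; rewrite !mxE -val_eqE /= val_eqE.
rewrite minor_mulmx.
have [f /andP [f_incr f_neq0] _ | all0] := pickP (fun f : {ffun 'I_k -> 'I_n} =>
  increasingb f && (minor M w f != 0)); first by exists f.
rewrite big1 => [/eqP | f f_incr]; first by rewrite eq_sym oner_eq0.
by move: (all0 f); rewrite f_incr => /negbFE /eqP ->; rewrite mul0r.
Qed.

Lemma top_minor_mul_gt0 M G k (le_kn : (k <= n)%N) (c : 'I_k -> 'I_n) :
  M \in unitmx -> (forall S, 0 <= plucker M S) ->
  (forall k (r c : 'I_k -> 'I_n), increasing r -> increasing c -> 0 < minor G r c) ->
  increasing c -> 0 < minor (M *m G) (widen_ord le_kn) c.
Proof.
move=> M_unit M_ge0 G_pos c_incr; rewrite minor_mulmx.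
have [f0 f0_incr f0_neq0] := exists_top_minor_neq0 le_kn M_unit.
have M_top_ge0 f : increasingb f -> 0 <= minor M (widen_ord le_kn) f.
  by move/increasingP => f_incr; rewrite -(plucker_imset M le_kn f_incr).
rewrite (bigD1 f0) //=; apply: ltr_wpDr.
  apply: sumr_ge0 => f /andP [f_incr _].
  by rewrite mulr_ge0 ?M_top_ge0 ?ltW ?G_pos //; apply/increasingP.
by rewrite mulr_gt0 ?G_pos // ?lt_def ?f0_neq0 ?M_top_ge0 //; apply/increasingP.
Qed.

Lemma top_minors_lbound M : (forall k (le_kn : (k <= n)%N) (c : 'I_k -> 'I_n),
    increasing c -> 0 < minor M (widen_ord le_kn) c) ->
  exists2 mu : R, 0 < mu & forall k (le_kn : (k <= n)%N) (c : 'I_k -> 'I_n),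
    increasing c -> mu <= minor M (widen_ord le_kn) c.
Proof.
move=> M_top_gt0; exists (\big[Num.min/1]_S plucker M S).
  apply: lt_bigmin => // S _; rewrite pluckerE; apply: M_top_gt0.
  exact: increasing_enum_val.
by move=> k le_kn c c_incr; rewrite -(plucker_imset M le_kn c_incr) bigmin_le.
Qed.

End Pluecker.

Section LowerTotallyPositive.
Variables (R : realType) (n : nat) (M : 'M[R]_n) (mu : R).
Hypothesis mu_gt0 : 0 < mu.
Hypothesis M_top_ge : forall k (le_kn : (k <= n)%N) (c : 'I_k -> 'I_n),
  increasing c -> mu <= minor M (widen_ord le_kn) c.

Let B : R := 1 + mx_l1 (falling_mx R n) + mx_l1 M.
Let K : R := (n`!%:R * B ^+ n) ^+ 2.
Let N : R := (n ^ n)%:R.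

Lemma scaled_falling_mul_tp t : 0 < t -> t <= 1 -> t * N * K < mu ->
  totally_positive (scaled_falling_mx n t *m M).
Proof.
move=> t_gt0 t_le1 t_small k r c k_gt0 r_incr c_incr.
have le_kn : (k <= n)%N.
  have lt_k1_k : (k.-1 < k)%N by rewrite prednK.
  rewrite -(prednK k_gt0); apply: leq_ltn_trans (increasing_leq r_incr (Ordinal lt_k1_k)) _.
  exact: ltn_ord.
have B_ge1 : 1 <= B by rewrite /B -addrA lerDl addr_ge0 ?mx_l1_ge0.
change (0 < minor (scaled_falling_mx n t *m M) r c); rewrite minor_mulmx.
under eq_bigr do rewrite minor_scaled_falling_mx -mulrA.
(* The term through the leftmost columns carries the lowest power of t. *)
pose f0 : {ffun 'I_k -> 'I_n} := [ffun b => widen_ord le_kn b].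
apply: (@sum_dominant_gt0 _ _ _ f0 _ _ t mu K N) => //.
- by apply/increasingP => a b; rewrite !ffunE.
- move=> f /increasingP f_incr f_neq_f0.
  rewrite (eq_bigr (fun b : 'I_k => b : nat)) => [|b _]; last by rewrite ffunE.
  apply: increasing_sum_lt => //.
  have [b fb_neq] : exists b, f b != f0 b.
    apply/existsP; apply: contraNT f_neq_f0 => /existsPn f_eq.
    by apply/eqP/ffunP => b; apply/eqP/negbNE/f_eq.
  exists b; rewrite ltn_neqAle increasing_leq // andbT.
  by move: fb_neq; rewrite ffunE -val_eqE eq_sym.
- rewrite -[mu]mul1r; apply: ler_pM; [exact: ler01 | exact: ltW | |].
    rewrite (@eq_minor _ _ _ _ _ r r f0 (widen_ord le_kn)) // => [|b]; last by rewrite ffunE.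
    exact: falling_mx_minor_ge1.
  by rewrite (@eq_minor _ _ _ _ _ f0 (widen_ord le_kn) c c) ?M_top_ge // => b; rewrite ffunE.
- move=> f; rewrite normrM /K expr2; apply: ler_pM; rewrite ?normr_ge0 //;
    apply: minor_norm_le => //; rewrite /B; have := mx_l1_ge0 (falling_mx R n);
    have := mx_l1_ge0 M; lra.
- rewrite card_ffun !card_ord ler_nat leq_pexp2l //.
  exact: leq_trans k_gt0 le_kn.
Qed.

Lemma exists_lower_tp_mul :
  exists X : 'M[R]_n, [/\ X \in unitmx, is_trig_mx X & totally_positive (X *m M)].
Proof.
have NK_ge0 : 0 <= N * K by apply: mulr_ge0; [exact: ler0n | exact: sqr_ge0].
pose t := mu / (N * K + mu + 1).
have den_gt0 : 0 < N * K + mu + 1 by have := mu_gt0; lra.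
have t_gt0 : 0 < t by rewrite divr_gt0.
exists (scaled_falling_mx n t); split.
- by apply: scaled_falling_mx_unit; rewrite gt_eqF.
- exact: scaled_falling_mx_lower.
apply: scaled_falling_mul_tp => //.
  by rewrite ler_pdivrMr // mul1r; lra.
have -> : t * N * K = mu * (N * K / (N * K + mu + 1)) by rewrite /t; field; rewrite gt_eqF.
by rewrite gtr_pMr // ltr_pdivrMr // mul1r; have := mu_gt0; lra.
Qed.

End LowerTotallyPositive.

Lemma plucker_ge0_tnn_flag (R : realType) n (M : 'M[R]_n) :
  M \in unitmx -> (forall S, 0 <= plucker M S) -> in_tnn_flag M.
Proof.
move=> M_unit M_ge0; split => // eps eps_gt0.
have l1_ge0 := mx_l1_ge0 M.
pose q := 1 + 2 * (mx_l1 M + 1) / eps.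
have q_gt1 : 1 < q by rewrite /q ltrDl divr_gt0 // mulr_gt0 //; lra.
have q_gt0 : 0 < q by lra.
pose M' := M *m sech_mx q n.
have M'_near i j : `|M' i j - M i j| < eps.
  apply: le_lt_trans (mulmx_near M (fun i j => sech_mx_near_id q_gt1 i j) i j) _.
  rewrite mulrA ltr_pdivrMr //.
  have -> : eps * q = eps + 2 * (mx_l1 M + 1) by rewrite /q; field; rewrite gt_eqF.
  lra.
have M'_top_gt0 k (le_kn : (k <= n)%N) c : increasing c -> 0 < minor M' (widen_ord le_kn) c.
  by apply: top_minor_mul_gt0 => // k' r c' r_incr c'_incr; apply: sech_mx_minor_gt0.
have [mu mu_gt0 mu_le] := top_minors_lbound M'_top_gt0.
have [X [X_unit X_lower X_tp]] := exists_lower_tp_mul mu_gt0 mu_le.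
exists (invmx X), (X *m M'); split => //.
- by split; [rewrite unitmx_inv | apply/is_trig_mxP/trig_invmx].
- by move=> i j; rewrite mulmxA mulVmx // mul1mx.
Qed.

Theorem mainTheorem5 (R : realType) (n : nat) (C : {set {set 'I_n}}) :
  synthetic_flag_positroid R C <-> realizable_flag_positroid R C.
Proof.
split.
- by case=> M [M_unit M_ge0 ->]; exists M; split => //; apply: plucker_ge0_tnn_flag.
- by case=> M [M_tnn ->]; apply: tnn_flag_synthetic.
Qed.
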